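(* Let $\lambda>0$, $\nu>0$ and $\mu\in\mathbb{R}$ be constants, and let $F$ be one of the functions $$F_1(t)=\frac{\arctan(\lambda t+\mu)-\arctan(\frac{\lambda t}{2}+\mu)}{\arctan(\frac{\lambda t}{2}+\mu)-\arctan(\frac{\lambda t}{4}+\mu)},\qquad F_2(t)=\frac{\frac{1}{t/2+\nu}-\frac{1}{t+\nu}}{\frac{1}{t/4+\nu}-\frac{1}{t/2+\nu}}.$$ Let $t>0$. If $F(t)\ge\frac32$, then $F(t/2)>\frac32$. *)

From Stdlib Require Import Reals.
Open Scope R_scope.

Definition F1 (lam mu t : R) : R :=
  (atan (lam * t + mu) - atan (lam * t / 2 + mu)) /
  (atan (lam * t / 2 + mu) - atan (lam * t / 4 + mu)).

Definition F2 (nu t : R) : R :=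
  (1 / (t / 2 + nu) - 1 / (t + nu)) /
  (1 / (t / 4 + nu) - 1 / (t / 2 + nu)).

From Stdlib Require Import Reals Lra Psatz.
Open Scope R_scope.

(* With [G s = atan (2 s + mu) - 3/2 atan (s + mu)] and [a = lam t / 4], the
   hypothesis [F1 t >= 3/2] says [G a <= G (2 a)] and the conclusion says
   [G (a/2) < G a].  The derivative of [G] has the sign of
   [1 + mu^2 - 4 mu s - 8 s^2], which on [s > 0] is first positive and then
   negative, so [G] rises and then falls there; [G a <= G (2 a)] rules out that
   [a] lies in the falling part.  For [F2] everything is explicit:
   [F2 t = (t/2 + 2 nu) / (t + nu)], and [F2 t >= 3/2] iff [t <= nu/2]. *)

Lemma Rdiv_ge_iff x y k : 0 < y -> (x / y >= k <-> x >= k * y).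
Proof.
  intro Hy. assert (Hx : x = x / y * y) by (field; lra).
  split; intro H; nra.
Qed.

Lemma Rdiv_gt_iff x y k : 0 < y -> (x / y > k <-> x > k * y).
Proof.
  intro Hy. assert (Hx : x = x / y * y) by (field; lra).
  split; intro H; nra.
Qed.

Lemma lt_of_derive_pos f f' a b :
  a < b -> (forall c, a <= c <= b -> derivable_pt_lim f c (f' c)) ->
  (forall c, a < c < b -> 0 < f' c) -> f a < f b.
Proof.
  intros Hab Hd Hpos.
  destruct (MVT_cor2 f f' a b Hab Hd) as [c [Ec Hc]].
  specialize (Hpos c Hc). nra.
Qed.

Lemma lt_of_derive_neg f f' a b :
  a < b -> (forall c, a <= c <= b -> derivable_pt_lim f c (f' c)) ->
  (forall c, a < c < b -> f' c < 0) -> f b < f a.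
Proof.
  intros Hab Hd Hneg.
  destruct (MVT_cor2 f f' a b Hab Hd) as [c [Ec Hc]].
  specialize (Hneg c Hc). nra.
Qed.

Section SinglePeak.

Variables f q r : R -> R.
Hypothesis f_deriv : forall s, 0 < s -> derivable_pt_lim f s (q s / r s).
Hypothesis r_pos : forall s, 0 < s -> 0 < r s.
Hypothesis q_pos_of_le : forall c a, 0 < c < a -> 0 <= q a -> 0 < q c.

Lemma single_peak_lt_of_le b a d : 0 < b < a -> a < d -> f a <= f d -> f b < f a.
Proof.
  intros Hba Had Hfad.
  destruct (Rle_or_lt 0 (q a)) as [Hqa | Hqa].
  - apply (lt_of_derive_pos f (fun s => q s / r s)); [lra | intros; apply f_deriv; lra |].
    intros c Hc. apply Rdiv_lt_0_compat; [apply (q_pos_of_le c a) | apply r_pos]; lra.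
  - enough (f d < f a) by lra.
    apply (lt_of_derive_neg f (fun s => q s / r s)); [lra | intros; apply f_deriv; lra |].
    intros c Hc.
    assert (Hqc : q c < 0).
    { destruct (Rle_or_lt 0 (q c)) as [Hqc | Hqc]; [|exact Hqc].
      pose proof (q_pos_of_le a c ltac:(lra) Hqc). lra. }
    assert (Hrc : 0 < r c) by (apply r_pos; lra).
    unfold Rdiv. apply Rmult_neg_pos; [exact Hqc | apply Rinv_0_lt_compat, Hrc].
Qed.

End SinglePeak.

Definition atan_doubling_gap (mu s : R) : R := atan (2 * s + mu) - 3 / 2 * atan (s + mu).

Definition atan_doubling_gap_numer (mu s : R) : R := 1 + mu ^ 2 - 4 * mu * s - 8 * s ^ 2.

Definition atan_doubling_gap_denom (mu s : R) : R :=
  2 * (1 + (2 * s + mu) ^ 2) * (1 + (s + mu) ^ 2).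

Lemma derivable_pt_lim_atan_affine k mu c :
  derivable_pt_lim (fun s => atan (k * s + mu)) c (k / (1 + (k * c + mu) ^ 2)).
Proof.
  assert (Haff : derivable_pt_lim (fun s => k * s + mu) c k).
  { pose proof (derivable_pt_lim_plus (fun s => k * s) (fun _ => mu) c _ _
      (derivable_pt_lim_scal id k c 1 (derivable_pt_lim_id c))
      (derivable_pt_lim_const mu c)) as Hsum.
    rewrite Rmult_1_r, Rplus_0_r in Hsum. exact Hsum. }
  replace (k / (1 + (k * c + mu) ^ 2)) with (/ (1 + (k * c + mu) ^ 2) * k)
    by (unfold Rdiv; ring).
  exact (derivable_pt_lim_comp _ atan c _ _ Haff (derivable_pt_lim_atan (k * c + mu))).
Qed.

Lemma atan_doubling_gap_denom_pos mu s : 0 < atan_doubling_gap_denom mu s.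
Proof.
  unfold atan_doubling_gap_denom.
  pose proof (pow2_ge_0 (2 * s + mu)). pose proof (pow2_ge_0 (s + mu)). nra.
Qed.

Lemma derivable_pt_lim_atan_doubling_gap mu s :
  derivable_pt_lim (atan_doubling_gap mu) s
    (atan_doubling_gap_numer mu s / atan_doubling_gap_denom mu s).
Proof.
  apply (derivable_pt_lim_ext (fun s => atan (2 * s + mu) - 3 / 2 * atan (1 * s + mu))).
  { intro z. unfold atan_doubling_gap. rewrite Rmult_1_l. reflexivity. }
  pose proof (pow2_ge_0 (2 * s + mu)). pose proof (pow2_ge_0 (s + mu)).
  replace (atan_doubling_gap_numer mu s / atan_doubling_gap_denom mu s)
    with (2 / (1 + (2 * s + mu) ^ 2) - 3 / 2 * (1 / (1 + (1 * s + mu) ^ 2)))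
    by (unfold atan_doubling_gap_numer, atan_doubling_gap_denom; field; lra).
  apply derivable_pt_lim_minus; [| apply derivable_pt_lim_scal];
    apply derivable_pt_lim_atan_affine.
Qed.

Lemma atan_doubling_gap_numer_pos_of_le mu c a :
  0 < c < a -> 0 <= atan_doubling_gap_numer mu a -> 0 < atan_doubling_gap_numer mu c.
Proof.
  unfold atan_doubling_gap_numer. intros Hca Hqa.
  assert (E : a * (1 + mu ^ 2 - 4 * mu * c - 8 * c ^ 2)
              = c * (1 + mu ^ 2 - 4 * mu * a - 8 * a ^ 2) + (a - c) * (1 + mu ^ 2 + 8 * a * c))
    by ring.
  assert (0 <= c * (1 + mu ^ 2 - 4 * mu * a - 8 * a ^ 2)) by (apply Rmult_le_pos; lra).
  assert (0 < (a - c) * (1 + mu ^ 2 + 8 * a * c))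
    by (apply Rmult_lt_0_compat; pose proof (pow2_ge_0 mu); nra).
  apply (Rmult_lt_reg_l a); lra.
Qed.

Lemma atan_doubling_gap_lt_of_le mu b a d :
  0 < b < a -> a < d ->
  atan_doubling_gap mu a <= atan_doubling_gap mu d ->
  atan_doubling_gap mu b < atan_doubling_gap mu a.
Proof.
  apply (single_peak_lt_of_le _ (atan_doubling_gap_numer mu) (atan_doubling_gap_denom mu)).
  - intros s _. apply derivable_pt_lim_atan_doubling_gap.
  - intros s _. apply atan_doubling_gap_denom_pos.
  - apply atan_doubling_gap_numer_pos_of_le.
Qed.

Lemma F1_denom_pos lam mu t :
  0 < lam -> 0 < t -> 0 < atan (lam * t / 2 + mu) - atan (lam * t / 4 + mu).
Proof.
  intros Hl Ht. assert (Hlt : 0 < lam * t) by nra.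
  enough (atan (lam * t / 4 + mu) < atan (lam * t / 2 + mu)) by lra.
  apply atan_increasing. lra.
Qed.

Lemma F1_numer_sub_denom lam mu t :
  atan (lam * t + mu) - atan (lam * t / 2 + mu)
    - 3 / 2 * (atan (lam * t / 2 + mu) - atan (lam * t / 4 + mu))
  = atan_doubling_gap mu (lam * t / 2) - atan_doubling_gap mu (lam * t / 4).
Proof.
  unfold atan_doubling_gap.
  replace (2 * (lam * t / 2)) with (lam * t) by field.
  replace (2 * (lam * t / 4)) with (lam * t / 2) by field.
  ring.
Qed.

Lemma F1_ge_iff lam mu t : 0 < lam -> 0 < t ->
  (F1 lam mu t >= 3 / 2 <->
   atan_doubling_gap mu (lam * t / 4) <= atan_doubling_gap mu (lam * t / 2)).
Proof.
  intros Hl Ht. unfold F1. rewrite Rdiv_ge_iff by (apply F1_denom_pos; lra).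
  pose proof (F1_numer_sub_denom lam mu t). lra.
Qed.

Lemma F1_gt_iff lam mu t : 0 < lam -> 0 < t ->
  (F1 lam mu t > 3 / 2 <->
   atan_doubling_gap mu (lam * t / 4) < atan_doubling_gap mu (lam * t / 2)).
Proof.
  intros Hl Ht. unfold F1. rewrite Rdiv_gt_iff by (apply F1_denom_pos; lra).
  pose proof (F1_numer_sub_denom lam mu t). lra.
Qed.

Lemma F2_eq nu t : 0 < nu -> 0 < t -> F2 nu t = (t / 2 + 2 * nu) / (t + nu).
Proof. intros Hn Ht. unfold F2. field. lra. Qed.

Lemma F2_ge_iff nu t : 0 < nu -> 0 < t -> (F2 nu t >= 3 / 2 <-> t <= nu / 2).
Proof. intros Hn Ht. rewrite F2_eq, Rdiv_ge_iff by lra. lra. Qed.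

Lemma F2_gt_iff nu t : 0 < nu -> 0 < t -> (F2 nu t > 3 / 2 <-> t < nu / 2).
Proof. intros Hn Ht. rewrite F2_eq, Rdiv_gt_iff by lra. lra. Qed.

Theorem corollary3p2 (lam nu mu t : R) :
  0 < lam -> 0 < nu -> 0 < t ->
  (F1 lam mu t >= 3 / 2 -> F1 lam mu (t / 2) > 3 / 2) /\
  (F2 nu t >= 3 / 2 -> F2 nu (t / 2) > 3 / 2).
Proof.
  intros Hl Hn Ht. split.
  - rewrite F1_ge_iff, F1_gt_iff by lra. intro Hgap.
    assert (Hlt : 0 < lam * t) by nra.
    replace (lam * (t / 2) / 2) with (lam * t / 4) by field.
    apply (atan_doubling_gap_lt_of_le mu _ _ (lam * t / 2)); [split | |]; lra.
  - rewrite F2_ge_iff, F2_gt_iff by lra. lra.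
Qed.
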